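(* Let $V$ be a $2n$-dimensional real vector space and let $\omega,\Omega$ be two symplectic (nondegenerate alternating bilinear) forms on $V$. If the set of Lagrangian subspaces of $V$ with respect to $\omega$ coincides with the set of Lagrangian subspaces with respect to $\Omega$, then there is a constant $c\neq0$ with $\Omega=c\,\omega$.
   Context: A Lagrangian subspace of a $2n$-dimensional symplectic vector space $(V,\omega)$ is an $n$-dimensional subspace on which $\omega$ vanishes identically. *)

From HB Require Import structures.
From mathcomp Require Import all_boot all_order all_algebra.
From mathcomp Require Import reals.
Set Implicit Arguments. Unset Strict Implicit. Unset Printing Implicit Defensive.
Import Order.TTheory GRing.Theory Num.Theory.
Local Open Scope ring_scope.

Definition bilinear_form (R : pzRingType) (V : lmodType R) (w : V -> V -> R) :=
  (forall (a : R) (u v x : V), w (a *: u + v) x = a * w u x + w v x) /\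
  (forall (a : R) (x u v : V), w x (a *: u + v) = a * w x u + w x v).

Definition alternating_form (R : pzRingType) (V : lmodType R) (w : V -> V -> R) :=
  forall v : V, w v v = 0.

Definition nondegenerate_form (R : pzRingType) (V : lmodType R) (w : V -> V -> R) :=
  forall u : V, (forall v : V, w u v = 0) -> u = 0.

Definition symplectic_form (R : pzRingType) (V : lmodType R) (w : V -> V -> R) :=
  [/\ bilinear_form w, alternating_form w & nondegenerate_form w].

(* Lagrangian subspace of a 2n-dimensional symplectic space: an n-dimensional
   subspace on which w vanishes identically. *)
Definition lagrangian (F : fieldType) (V : vectType F) (n : nat)
    (w : V -> V -> F) (U : {vspace V}) :=
  \dim U = n /\ (forall u v, u \in U -> v \in U -> w u v = 0).

From HB Require Import structures.
From mathcomp Require Import all_boot all_order all_algebra.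
From mathcomp Require Import reals.
From mathcomp Require Import zify ring.
From Stdlib Require Import Classical.
Import Order.TTheory GRing.Theory Num.Theory.
Local Open Scope ring_scope.
Set Implicit Arguments. Unset Strict Implicit. Unset Printing Implicit Defensive.
Import VectorInternalTheory.

(* In a 2n-dimensional symplectic space every isotropic subspace extends to a
   Lagrangian one: its orthogonal has dimension 2n - dim U, which exceeds dim U
   until dim U = n.  Hence any w-orthogonal pair u, v spans an isotropic space
   lying in some w-Lagrangian, which is then also W-Lagrangian, so
   w u v = 0 implies W u v = 0.  Two alternating forms with this property are
   proportional: for fixed u the functionals w u and W u have nested kernels,
   so W u v * w u x = W u x * w u v, and the ratio W/w is transported from any
   pair with w u v <> 0 to any other through a common partner z. *)

Section IsotropicMatrices.

Variables (F : fieldType) (m : nat) (G : 'M[F]_m).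
Hypotheses (G_skew : G^T = - G) (G_alt : forall x : 'rV_m, x *m G *m x^T = 0).
Hypothesis G_unit : G \in unitmx.

Definition isotropic_mx p (A : 'M_(p, m)) := A *m G *m A^T = 0.

Lemma isotropic_mx_orth p q r (L : 'M_(p, m)) (A : 'M_(q, m)) (B : 'M_(r, m)) :
  isotropic_mx L -> (A <= L)%MS -> (B <= L)%MS -> A *m G *m B^T = 0.
Proof.
move=> isoL /submxP[C ->] /submxP[D ->]; rewrite trmx_mul.
have -> : C *m L *m G *m (L^T *m D^T) = C *m (L *m G *m L^T) *m D^T.
  by rewrite !mulmxA.
by rewrite isoL mulmx0 mul0mx.
Qed.

Lemma orth_mx_sym p q (A : 'M_(p, m)) (B : 'M_(q, m)) :
  A *m G *m B^T = 0 -> B *m G *m A^T = 0.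
Proof.
move/(congr1 trmx); rewrite !trmx_mul trmxK G_skew trmx0 mulNmx mulmxN mulmxA.
by move/eqP; rewrite oppr_eq0 => /eqP.
Qed.

Lemma isotropic_mx_adds p q (A : 'M_(p, m)) (B : 'M_(q, m)) :
  isotropic_mx A -> isotropic_mx B -> B *m G *m A^T = 0 ->
  isotropic_mx (A + B)%MS.
Proof.
move=> isoA isoB orthBA.
have isoAB : isotropic_mx (col_mx A B).
  rewrite /isotropic_mx tr_col_mx mul_col_mx mul_col_row.
  by rewrite isoA isoB orthBA (orth_mx_sym orthBA) block_mx0.
by apply: isotropic_mx_orth isoAB _ _; rewrite addsmxE.
Qed.

Lemma mxrank_orth p (L : 'M_(p, m)) :
  \rank (kermx (G *m L^T)) = (m - \rank L)%N.
Proof.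
rewrite mxrank_ker -mxrank_tr trmx_mul trmxK mxrankMfree ?mxrank_tr //.
by rewrite row_free_unit unitmx_tr.
Qed.

Lemma isotropic_mx_rank_half p (L : 'M_(p, m)) :
  isotropic_mx L -> (2 * \rank L <= m)%N.
Proof.
move=> isoL; have : (L <= kermx (G *m L^T))%MS.
  by apply/sub_kermxP; rewrite mulmxA.
move/mxrankS; rewrite mxrank_orth; have := rank_leq_col L; lia.
Qed.

Lemma isotropic_mx_step (L : 'M_m) : isotropic_mx L -> (2 * \rank L < m)%N ->
  exists2 L' : 'M_m, (L <= L')%MS & isotropic_mx L' /\ (\rank L < \rank L')%N.
Proof.
move=> isoL lt_m; set P := kermx (G *m L^T).
have /row_subPn[i xNL] : ~~ (P <= L)%MS.
  by apply/negP => /mxrankS; rewrite mxrank_orth; lia.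
set x := row i P.
have orth_xL : x *m G *m L^T = 0.
  by rewrite -mulmxA; apply/sub_kermxP/row_sub.
exists (L + x)%MS; first exact: addsmxSl.
split; first exact: isotropic_mx_adds.
apply: rank_ltmx; rewrite ltmxE addsmxSl /=.
by apply: contra xNL; apply: submx_trans (addsmxSr L x).
Qed.

Lemma isotropic_mx_lagrangian_ext (L : 'M_m) : isotropic_mx L ->
  exists2 L' : 'M_m, (L <= L')%MS & isotropic_mx L' /\ (2 * \rank L')%N = m.
Proof.
move: {2}(m - 2 * \rank L)%N (leqnn (m - 2 * \rank L)) => d.
elim: d L => [|d IHd] L le_d isoL.
  by exists L => //; split=> //; have := isotropic_mx_rank_half isoL; lia.
have [le_m|lt_m] := leqP m (2 * \rank L).
  by exists L => //; split=> //; have := isotropic_mx_rank_half isoL; lia.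
have [L1 sLL1 [isoL1 lt_rank]] := isotropic_mx_step isoL lt_m.
have [L2 sL1L2 lagL2] := IHd L1 ltac:(lia) isoL1.
by exists L2 => //; apply: submx_trans sL1L2.
Qed.

End IsotropicMatrices.

Section BilinearForms.

Variables (R : pzRingType) (V : lmodType R) (w : V -> V -> R).
Hypothesis w_bilin : bilinear_form w.

Lemma formDr x u v : w x (u + v) = w x u + w x v.
Proof. by rewrite -[u]scale1r w_bilin.2 mul1r scale1r. Qed.

Lemma formDl u v x : w (u + v) x = w u x + w v x.
Proof. by rewrite -[u]scale1r w_bilin.1 mul1r scale1r. Qed.

Lemma form0l x : w 0 x = 0.
Proof. by have := w_bilin.1 (-1) 0 0 x; rewrite scaler0 addr0 mulN1r addNr. Qed.

Lemma form0r x : w x 0 = 0.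
Proof. by have := w_bilin.2 (-1) x 0 0; rewrite scaler0 addr0 mulN1r addNr. Qed.

Lemma formZr a x u : w x (a *: u) = a * w x u.
Proof. by have := w_bilin.2 a x u 0; rewrite addr0 form0r addr0. Qed.

Lemma form_suml k (a : 'I_k -> R) (f : 'I_k -> V) y :
  w (\sum_i a i *: f i) y = \sum_i a i * w (f i) y.
Proof. by elim/big_rec2: _ => [|i s1 s2 _ <-]; rewrite ?form0l ?w_bilin.1. Qed.

Lemma form_sumr k (a : 'I_k -> R) (f : 'I_k -> V) y :
  w y (\sum_i a i *: f i) = \sum_i a i * w y (f i).
Proof. by elim/big_rec2: _ => [|i s1 s2 _ <-]; rewrite ?form0r ?w_bilin.2. Qed.

Lemma alternating_formN : alternating_form w -> forall x y, w y x = - w x y.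
Proof.
move=> w_alt x y; apply/eqP; rewrite -addr_eq0 addrC.
by have := w_alt (x + y); rewrite formDl !formDr !w_alt add0r addr0 => ->.
Qed.

End BilinearForms.

Section GramMatrix.

Variables (R : fieldType) (V : vectType R).
Implicit Types (w : V -> V -> R) (x y : V).

Definition gram_mx w : 'M[R]_(dim V) :=
  \matrix_(i, j) w (r2v (delta_mx 0 i)) (r2v (delta_mx 0 j)).

Lemma memv_v2r x (U : {vspace V}) : (x \in U) = (v2r x <= vs2mx U)%MS.
Proof. by rewrite -genmxE. Qed.

Lemma gram_mxE w : bilinear_form w ->
  forall x y, w x y = (v2r x *m gram_mx w *m (v2r y)^T) 0 0.
Proof.
have coordE x : x = \sum_i v2r x 0 i *: r2v (delta_mx 0 i).
  rewrite -{1}[x]v2rK {1}(row_sum_delta (v2r x)) linear_sum.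
  by apply: eq_bigr => i _; rewrite linearZ.
move=> w_bilin x y.
rewrite {1}(coordE x) {1}(coordE y) form_suml // !mxE.
under eq_bigr do rewrite form_sumr // big_distrr.
rewrite exchange_big /=; apply: eq_bigr => j _.
rewrite !mxE big_distrl /=; apply: eq_bigr => i _.
by rewrite !mxE; ring.
Qed.

Lemma gram_mx_skew w : symplectic_form w -> (gram_mx w)^T = - gram_mx w.
Proof.
by case=> w_bilin w_alt _; apply/matrixP => i j; rewrite !mxE alternating_formN.
Qed.

Lemma gram_mx_alt w : symplectic_form w ->
  forall x : 'rV_(dim V), x *m gram_mx w *m x^T = 0.
Proof.
case=> w_bilin w_alt _ x.
by rewrite -[x]r2vK [LHS]mx11_scalar -gram_mxE // w_alt raddf0.
Qed.

Lemma gram_mx_unit w : symplectic_form w -> gram_mx w \in unitmx.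
Proof.
case=> w_bilin _ w_nondeg; rewrite -row_free_unit -kermx_eq0.
apply/eqP/row_matrixP => i; rewrite row0; set u := row i _.
have uG0 : u *m gram_mx w = 0 by rewrite /u -row_mul mulmx_ker row0.
suff /(congr1 v2r) : r2v u = 0 by rewrite r2vK linear0.
by apply: w_nondeg => y; rewrite gram_mxE // r2vK uG0 !mul0mx mxE.
Qed.

Lemma orth_pair_lagrangian n w (hdim : \dim (fullv : {vspace V}) = (2 * n)%N) :
  symplectic_form w -> forall u v, w u v = 0 ->
  exists U : {vspace V}, [/\ lagrangian n w U, u \in U & v \in U].
Proof.
move=> w_sympl u v uv0; have [w_bilin _ _] := w_sympl.
have isotropic_row := gram_mx_alt w_sympl.
have orth_uv : v2r u *m gram_mx w *m (v2r v)^T = 0.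
  by rewrite [LHS]mx11_scalar -gram_mxE // uv0 raddf0.
have isoUV : isotropic_mx (gram_mx w) (v2r u + v2r v)%MS.
  apply: (isotropic_mx_adds (gram_mx_skew w_sympl)); try exact: isotropic_row.
  exact: (orth_mx_sym (gram_mx_skew w_sympl) orth_uv).
have [L sUVL [isoL rankL]] := isotropic_mx_lagrangian_ext
  (gram_mx_skew w_sympl) isotropic_row (gram_mx_unit w_sympl) isoUV.
have memL x : (x \in mx2vs L) = (v2r x <= L)%MS by rewrite memv_v2r mx2vsK.
exists (mx2vs L); split; rewrite ?memL.
- split; first by rewrite /dimv mx2vsK; move: hdim; rewrite dimvf; lia.
  move=> x y; rewrite !memL => xL yL.
  by rewrite gram_mxE // (isotropic_mx_orth isoL xL yL) mxE.
- exact: submx_trans (addsmxSl _ _) sUVL.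
- exact: submx_trans (addsmxSr _ _) sUVL.
Qed.

End GramMatrix.

Lemma mulr_cross_trans (F : idomainType) (p1 q1 p2 q2 p3 q3 : F) : q2 != 0 ->
  p1 * q2 = p2 * q1 -> p2 * q3 = p3 * q2 -> p1 * q3 = p3 * q1.
Proof.
move=> q2_neq0 e12 e23; apply: (mulIf q2_neq0).
by rewrite mulrAC e12 mulrAC e23 mulrAC.
Qed.

Section ProportionalForms.

Variables (F : fieldType) (V : lmodType F) (w W : V -> V -> F).
Hypotheses (w_bilin : bilinear_form w) (W_bilin : bilinear_form W).
Hypotheses (w_alt : alternating_form w) (W_alt : alternating_form W).
Hypothesis orth_wW : forall u v, w u v = 0 -> W u v = 0.

Lemma form_ratio_left u v x : W u v * w u x = W u x * w u v.
Proof.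
pose y := w u v *: x + (- w u x) *: v.
have wy0 : w u y = 0 by rewrite w_bilin.2 formZr // mulNr mulrC addrN.
have := orth_wW wy0; rewrite /y W_bilin.2 formZr //.
move/eqP; rewrite mulNr addr_eq0 opprK => /eqP e.
by rewrite [LHS]mulrC -e mulrC.
Qed.

Lemma form_ratio_right u v x : W v u * w x u = W x u * w v u.
Proof.
by rewrite !(alternating_formN W_bilin W_alt u) !(alternating_formN w_bilin w_alt u)
  !mulrNN form_ratio_left.
Qed.

Lemma exists_common_partner u v a b : w u v != 0 -> w a b != 0 ->
  exists z, w u z != 0 /\ w a z != 0.
Proof.
move=> uv_neq0 ab_neq0.
have [av0|] := eqVneq (w a v) 0; last by exists v.
have [ub0|] := eqVneq (w u b) 0; last by exists b.
by exists (v + b); rewrite !formDr // av0 ub0 addr0 add0r.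
Qed.

Lemma form_cross_ratio u v a b : W u v * w a b = W a b * w u v.
Proof.
have [uv0|uv_neq0] := eqVneq (w u v) 0; first by rewrite uv0 (orth_wW uv0) mul0r mulr0.
have [ab0|ab_neq0] := eqVneq (w a b) 0; first by rewrite ab0 (orth_wW ab0) mul0r mulr0.
have [z [uz_neq0 az_neq0]] := exists_common_partner uv_neq0 ab_neq0.
apply: (mulr_cross_trans uz_neq0 (form_ratio_left _ _ _)).
apply: (mulr_cross_trans az_neq0 (form_ratio_right _ _ _)).
exact: form_ratio_left.
Qed.

Lemma form_proportional : exists c, forall u v, W u v = c * w u v.
Proof.
have [[a [b ab_neq0]]|w0] := classic (exists a b, w a b != 0).
  exists (W a b / w a b) => u v; apply: (mulIf ab_neq0).
  by rewrite form_cross_ratio mulrAC divfK.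
exists 0 => u v; rewrite mul0r orth_wW //; apply/eqP.
by apply: contra_notT w0 => uv_neq0; exists u, v.
Qed.

End ProportionalForms.

Theorem mainTheorem5 (R : realType) (V : vectType R) (n : nat)
    (hdim : \dim (fullv : {vspace V}) = (2 * n)%N)
    (w W : V -> V -> R) (hw : symplectic_form w) (hW : symplectic_form W)
    (hlag : forall U : {vspace V}, lagrangian n w U <-> lagrangian n W U) :
  exists c : R, c != 0 /\ forall u v : V, W u v = c * w u v.
Proof.
have [w_bilin w_alt _] := hw; have [W_bilin W_alt W_nondeg] := hW.
have orth_wW u v : w u v = 0 -> W u v = 0.
  move=> /(orth_pair_lagrangian hdim hw)[U [/hlag[_ W_isoU] uU vU]].
  exact: W_isoU.
have [c Wc] := form_proportional w_bilin W_bilin w_alt W_alt orth_wW.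
have [c0|c_neq0] := eqVneq c 0; last by exists c.
exists 1; split=> [|u v]; first exact: oner_neq0.
have -> : u = 0 by apply: W_nondeg => x; rewrite Wc c0 mul0r.
by rewrite form0l // form0l // mulr0.
Qed.
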